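(* A Poisson $n$-Lie algebra $\mathcal P$ of arbitrary dimension is nilpotent if and only if both its associative part $\mathcal P_A=(\mathcal P,\cdot)$ and its $n$-Lie part $\mathcal P_L=(\mathcal P,[-,\dots,-])$ are nilpotent.
   Context: A Poisson $n$-Lie algebra is a commutative associative algebra $(\mathcal P,\cdot)$ with an $n$-linear skew-symmetric bracket satisfying the fundamental identity $[x_1,\dots,x_{n-1},[y_1,\dots,y_n]]=\sum_{i=1}^n[y_1,\dots,[x_1,\dots,x_{n-1},y_i],\dots,y_n]$ and the Leibniz rule $[y\cdot z,x_2,\dots,x_n]=y\cdot[z,x_2,\dots,x_n]+z\cdot[y,x_2,\dots,x_n]$. Products/brackets of subspaces denote linear spans. $\mathcal P$ is nilpotent if $\mathcal P^s=0$ for some $s$, where $\mathcal P^1=\mathcal P$, $\mathcal P^{k+1}=[\mathcal P^k,\mathcal P,\dots,\mathcal P]+\mathcal P^k\cdot\mathcal P$. $\mathcal P_A$ is nilpotent if all products of some fixed number $s$ of elements vanish. $\mathcal P_L$ is nilpotent if $L^s=0$ for some $s$, where $L^1=\mathcal P$, $L^{k+1}=[L^k,\mathcal P,\dots,\mathcal P]$. *)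

From HB Require Import structures.
From mathcomp Require Import all_boot all_order all_algebra all_fingroup.
Set Implicit Arguments. Unset Strict Implicit. Unset Printing Implicit Defensive.
Import GRing.Theory.
Local Open Scope ring_scope.

Section PoissonNLie.
Variables (K : fieldType) (V : lmodType K) (n : nat).
Variable mul : V -> V -> V.
Variable br : ('I_n -> V) -> V.

Definition setarg (x : 'I_n -> V) (i : 'I_n) (z : V) : 'I_n -> V :=
  fun j => if j == i then z else x j.
Definition setlast (x : 'I_n -> V) (z : V) : 'I_n -> V :=
  fun j => if val j == n.-1 then z else x j.
Definition setfirst (x : 'I_n -> V) (z : V) : 'I_n -> V :=
  fun j => if val j == 0%N then z else x j.

Definition comm_assoc_bilinear : Prop :=
  [/\ (forall a u v w, mul (a *: u + v) w = a *: mul u w + mul v w),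
      (forall a u v w, mul w (a *: u + v) = a *: mul w u + mul w v),
      (forall u v, mul u v = mul v u) &
      (forall u v w, mul u (mul v w) = mul (mul u v) w)].

Definition multilinear : Prop :=
  forall (x : 'I_n -> V) (i : 'I_n) (a : K) (u v : V),
    br (setarg x i (a *: u + v)) = a *: br (setarg x i u) + br (setarg x i v).

Definition skew_symmetric : Prop :=
  forall (x : 'I_n -> V) (s : 'S_n),
    br (fun i => x (s i)) = (-1) ^+ odd_perm s *: br x.

Definition fundamental_identity : Prop :=
  forall (x y : 'I_n -> V),
    br (setlast x (br y)) = \sum_(i < n) br (setarg y i (br (setlast x (y i)))).

Definition leibniz_rule : Prop :=
  forall (x : 'I_n -> V) (y z : V),
    br (setfirst x (mul y z)) = mul y (br (setfirst x z)) + mul z (br (setfirst x y)).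

Record poisson_nlie : Prop := {
  pnl_mul : comm_assoc_bilinear;
  pnl_lin : multilinear;
  pnl_skew : skew_symmetric;
  pnl_fi : fundamental_identity;
  pnl_leib : leibniz_rule }.

Inductive span (S : V -> Prop) : V -> Prop :=
| span_gen v : S v -> span S v
| span_zero : span S 0
| span_add u v : span S u -> span S v -> span S (u + v)
| span_scale a v : span S v -> span S (a *: v).

(* Ppow k = P^{k+1}:  P^1 = P,  P^{k+1} = [P^k,P,...,P] + P^k . P *)
Fixpoint Ppow (k : nat) : V -> Prop :=
  match k with
  | 0 => fun _ => True
  | k'.+1 => span (fun v =>
       (exists (y : V) (x : 'I_n -> V), Ppow k' y /\ v = br (setfirst x y))
    \/ (exists y z : V, Ppow k' y /\ v = mul y z))
  end.

(* Lpow k = L^{k+1}:  L^1 = P,  L^{k+1} = [L^k,P,...,P] *)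
Fixpoint Lpow (k : nat) : V -> Prop :=
  match k with
  | 0 => fun _ => True
  | k'.+1 => span (fun v =>
       exists (y : V) (x : 'I_n -> V), Lpow k' y /\ v = br (setfirst x y))
  end.

Definition nilpotent_P : Prop := exists s, forall v, Ppow s v -> v = 0.
Definition nilpotent_L : Prop := exists s, forall v, Lpow s v -> v = 0.
(* all products x0 * x1 * ... * xs of s+1 elements vanish *)
Definition nilpotent_A : Prop :=
  exists s, forall (x0 : V) (xs : seq V), size xs = s -> foldl mul x0 xs = 0.

End PoissonNLie.

From HB Require Import structures.
From mathcomp Require Import all_boot all_order all_algebra all_fingroup.
From Stdlib Require Import FunctionalExtensionality.
Set Implicit Arguments. Unset Strict Implicit. Unset Printing Implicit Defensive.
Import GRing.Theory.
Local Open Scope ring_scope.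

(* P^k contains L^k and all products of k elements, whence the forward
   direction.  Conversely, the Leibniz rule turns the bracket of a product
   u_1 ... u_m (u_i in L^(d_i)) with elements of P into a sum of products of
   the same shape in which one d_i has grown by one; so P^k is spanned by
   such products with d_1 + ... + d_m = k.  If L^(t+1) = 0 and all products
   of s+1 elements vanish, a nonzero one has at most s factors, each with
   d_i <= t, hence P^(st+1) = 0. *)

Section Span.
Variables (K : fieldType) (V : lmodType K).
Implicit Types (S T : V -> Prop) (f : V -> V).

Lemma linear_fun0 f : linear f -> f 0 = 0.
Proof. by move=> f_lin; have := f_lin (-1) 0 0; rewrite scaler0 addr0 scaleN1r addNr. Qed.

Lemma span_linear_image S T f : linear f ->
  (forall v, S v -> span T (f v)) -> forall v, span S v -> span T (f v).
Proof.
move=> f_lin ST v; elim=> [w /ST // | | u w _ IHu _ IHw | a w _ IHw].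
- by rewrite linear_fun0 //; apply: span_zero.
- by rewrite -[u]scale1r f_lin scale1r; apply: span_add.
- by rewrite -[a *: w]addr0 f_lin linear_fun0 // addr0; apply: span_scale.
Qed.

Lemma span_sub S T : (forall v, S v -> span T v) -> forall v, span S v -> span T v.
Proof. exact: (@span_linear_image S T id (fun _ _ _ => erefl)). Qed.

Lemma span_eq0 S : (forall v, S v -> v = 0) -> forall v, span S v -> v = 0.
Proof.
move=> S0 v; elim=> [w /S0 // | | u w _ -> _ -> | a w _ ->] //.
  by rewrite addr0.
by rewrite scaler0.
Qed.

End Span.

Section LowerCentralSeries.
Variables (K : fieldType) (V : lmodType K) (n : nat).
Variables (mul : V -> V -> V) (br : ('I_n -> V) -> V).

Lemma Lpow_succ k v : Lpow br k.+1 v -> Lpow br k v.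
Proof.
elim: k v => [// | k IHk] v /=.
apply: span_sub => _ [y [x [Ly ->]]]; apply: span_gen.
by exists y, x; split=> //; apply: IHk.
Qed.

Lemma Lpow_antitone j k v : (j <= k)%N -> Lpow br k v -> Lpow br j v.
Proof.
move=> /subnK <-; elim: (k - j)%N v => [// | d IHd] v.
by rewrite addSn => /Lpow_succ /IHd.
Qed.

Lemma multilinear_setfirst : (0 < n)%N -> multilinear br ->
  forall x, linear (fun y => br (setfirst x y)).
Proof.
move=> n_gt0 br_lin x a u v /=.
have setfirstE y : setfirst x y = setarg x (Ordinal n_gt0) y.
  exact: functional_extensionality.
by rewrite !setfirstE br_lin.
Qed.

Lemma Lpow_Ppow k v : Lpow br k v -> Ppow mul br k v.
Proof.
elim: k v => [// | k IHk] v /=.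
apply: span_sub => _ [y [x [Ly ->]]]; apply: span_gen.
by left; exists y, x; split=> //; apply: IHk.
Qed.

Lemma Ppow_foldl k y xs : Ppow mul br k y -> Ppow mul br (k + size xs) (foldl mul y xs).
Proof.
elim: xs k y => [| x xs IHxs] k y Py /=; first by rewrite addn0.
rewrite addnS -addSn; apply: IHxs; apply: span_gen.
by right; exists y, x.
Qed.

Lemma nilpotent_P_A : nilpotent_P mul br -> nilpotent_A mul.
Proof.
move=> [s Ps0]; exists s => x0 xs size_xs; apply: Ps0; rewrite -size_xs.
exact: (Ppow_foldl xs (I : Ppow mul br 0 x0)).
Qed.

Lemma nilpotent_P_L : nilpotent_P mul br -> nilpotent_L br.
Proof. by move=> [s Ps0]; exists s => v /Lpow_Ppow /Ps0. Qed.

(* [Lmonomial d v]: v is a left-normed product u_1 ... u_m with u_i in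
   L^(d_i) and d = d_1 + ... + d_m; recall that [Lpow br a] is L^(a+1). *)
Inductive Lmonomial : nat -> V -> Prop :=
| Lmonomial_Lpow a u : Lpow br a u -> Lmonomial a.+1 u
| Lmonomial_mulLpow d p a w :
    Lmonomial d p -> Lpow br a w -> Lmonomial (a.+1 + d) (mul p w).

Hypothesis mul_linear : forall w, linear (mul^~ w).
Hypothesis mulC : commutative mul.

Let mul0l w : mul 0 w = 0.
Proof. exact: linear_fun0 (mul_linear w). Qed.

Let mul0r w : mul w 0 = 0.
Proof. by rewrite mulC mul0l. Qed.

Let mul_linear_r w : linear (mul w).
Proof. by move=> a u v; rewrite !(mulC w); apply: mul_linear. Qed.

Hypothesis br_linear : forall x, linear (fun y => br (setfirst x y)).
Hypothesis leibniz : leibniz_rule mul br.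

Lemma Lmonomial_br x d v : Lmonomial d v -> span (Lmonomial d.+1) (br (setfirst x v)).
Proof.
elim=> [a u Lu | {}d p a w Mp IHp Lw].
  by apply/span_gen/Lmonomial_Lpow/span_gen; exists u, x.
rewrite leibniz; apply: span_add.
  by apply/span_gen/(@Lmonomial_mulLpow _ _ a.+1 _ Mp)/span_gen; exists w, x.
apply: (span_linear_image (mul_linear_r w) _ IHp) => q Mq.
by rewrite mulC -addnS; apply/span_gen/(@Lmonomial_mulLpow d.+1).
Qed.

Lemma Ppow_span_Lmonomial k v : Ppow mul br k v -> span (Lmonomial k.+1) v.
Proof.
elim: k v => [| k IHk] v /=; first by move=> _; apply/span_gen/Lmonomial_Lpow.
apply: span_sub => _ [[y [x [Py ->]]] | [y [z [Py ->]]]].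
  by apply: (span_linear_image (br_linear x) _ (IHk _ Py)) => p; apply: Lmonomial_br.
apply: (span_linear_image (mul_linear z) _ (IHk _ Py)) => p Mp.
exact/span_gen/(Lmonomial_mulLpow Mp (I : Lpow br 0 z)).
Qed.

Lemma foldl_mul_eq0 s x0 xs :
  (forall y0 ys, size ys = s -> foldl mul y0 ys = 0) ->
  (s <= size xs)%N -> foldl mul x0 xs = 0.
Proof.
move=> As0 le_s.
rewrite -(cat_take_drop s xs) foldl_cat (As0 x0 (take s xs)) ?size_takel //.
by elim: (drop s xs) => //= y ys; rewrite mul0l.
Qed.

Lemma Lmonomial_eq0_or_foldl t : (forall v, Lpow br t v -> v = 0) ->
  forall d v, Lmonomial d v ->
  v = 0 \/ exists x0 xs, v = foldl mul x0 xs /\ (d <= (size xs).+1 * t)%N.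
Proof.
move=> Lt0 d v; elim=> [a u Lu | {}d p a w _ [-> | [x0 [xs [-> le_d]]]] Lw].
- have [le_ta | lt_at] := leqP t a; first by left; apply/Lt0/(Lpow_antitone le_ta).
  by right; exists u, [::]; rewrite mul1n.
- by left; rewrite mul0l.
- have [le_ta | lt_at] := leqP t a.
    by left; rewrite (Lt0 w (Lpow_antitone le_ta Lw)) mul0r.
  right; exists x0, (rcons xs w).
  by rewrite -cats1 foldl_cat size_cat addn1 mulSn leq_add.
Qed.

Lemma nilpotent_A_L_P : nilpotent_A mul -> nilpotent_L br -> nilpotent_P mul br.
Proof.
move=> [s As0] [t Lt0]; exists (s * t)%N => v /Ppow_span_Lmonomial.
apply: span_eq0 => _ /(Lmonomial_eq0_or_foldl Lt0) [// | [x0 [xs [-> le_st]]]].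
apply: (foldl_mul_eq0 x0 As0); rewrite leqNgt; apply: contraTN le_st => lt_xs_s.
by rewrite -ltnNge ltnS leq_mul2r lt_xs_s orbT.
Qed.

End LowerCentralSeries.

Theorem proposition5p4 (K : fieldType) (V : lmodType K) (n : nat)
    (mul : V -> V -> V) (br : ('I_n -> V) -> V) :
  (2 <= n)%N -> poisson_nlie mul br ->
  (nilpotent_P mul br <-> nilpotent_A mul /\ nilpotent_L br).
Proof.
move=> n_ge2 [[mulD _ mulC _] br_lin _ _ leibniz]; split=> [P_nil | [A_nil L_nil]].
  by split; [exact: nilpotent_P_A P_nil | exact: nilpotent_P_L P_nil].
have br_lin1 := multilinear_setfirst (ltnW n_ge2) br_lin.
exact: (nilpotent_A_L_P (fun w a u v => mulD a u v w) mulC br_lin1 leibniz A_nil L_nil).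
Qed.
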